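(* Let $A_k\in\mathbb{R}^{m\times n_k}$ be matrices and $Q_k\in\mathbb{R}^{p\times p}$ orthogonal matrices, for $k=1,\dots,K$. Then the matrices $$X:=[A_1\ \cdots\ A_K]\quad\text{and}\quad Y:=[A_1\otimes Q_1\ \cdots\ A_K\otimes Q_K]$$ have the same singular values up to multiplicities.
   Context: $\otimes$ denotes the Kronecker product of matrices. *)

From HB Require Import structures.
From mathcomp Require Import all_boot all_order all_algebra.
From mathcomp Require Import character.
From mathcomp Require Import reals.
Set Implicit Arguments. Unset Strict Implicit. Unset Printing Implicit Defensive.
Import Order.TTheory GRing.Theory Num.Theory.
Local Open Scope ring_scope.

Definition orthogonal_mx (R : realType) (p : nat) (Q : 'M[R]_p) : Prop :=
  Q^T *m Q = 1%:M.

(* sigma is a singular value of M in R^{m x n} iff sigma >= 0 and there are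
   unit vectors u in R^m, v in R^n with M v = sigma u and M^T u = sigma v.
   (This gives exactly the min(m,n) singular values of the SVD, as a set.) *)
Definition singular_value (R : realType) (m n : nat) (M : 'M[R]_(m, n)) (s : R)
  : Prop :=
  0 <= s /\
  exists (u : 'cV[R]_m) (v : 'cV[R]_n),
    [/\ u^T *m u = 1%:M, v^T *m v = 1%:M, M *m v = s *: u & M^T *m u = s *: v].

From HB Require Import structures.
From mathcomp Require Import all_boot all_order all_algebra.
From mathcomp Require Import character.
From mathcomp Require Import reals.
From mathcomp.real_closed Require Import mxtens.
From mathcomp Require Import zify.
Import Order.TTheory GRing.Theory Num.Theory.
Local Open Scope ring_scope.

(* Reshaping x in R^(q p) into the q x p matrix untens x turns (B (x) C) x into
   B (untens x) C^T.  A singular pair (u, v) of Y = [A_k (x) Q_k] thus becomes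
   matrices U = untens u and W = [V_k Q_k^T]_k, with V_k the reshaped blocks of
   v, such that X W = s U and X^T U = s W; nonzero columns of U and W then give
   a singular pair of X.  Conversely, if (u, v) is a singular pair of X and e is
   a unit vector of R^p, then (u (x) e, [v_k (x) Q_k^T e]_k) is one of Y, the
   orthogonality of the Q_k making the second vector a unit vector again. *)

Section KroneckerEntries.
Variable F : fieldType.

Lemma trow_mxtensE n1 m2 n2 (r : 'rV[F]_n1) (B : 'M[F]_(m2, n2)) i k l :
  trow r B i (mxtens_index (k, l)) = r 0 k * B i l.
Proof.
elim: n1 r k => [|n1 IH] r [[|k] lt_k_n1] /=; rewrite ?mxE //.
- case: splitP => j /= j_eq; last by have := ltn_ord l; lia.
  by rewrite !mxE; congr (r _ _ * B _ _); apply: val_inj.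
- case: splitP => j /= j_eq; first by have := ltn_ord j; lia.
  have -> : j = mxtens_index (Ordinal (lt_k_n1 : k < n1)%N, l).
    by apply: val_inj => /=; lia.
  by rewrite IH mxE; congr (r _ _ * _); apply: val_inj.
Qed.

Lemma tprod_mxtensE m1 n1 m2 n2 (A : 'M[F]_(m1, n1)) (B : 'M[F]_(m2, n2))
    i j k l :
  tprod A B (mxtens_index (i, j)) (mxtens_index (k, l)) = A i k * B j l.
Proof.
elim: m1 A i => [|m1 IH] A [[|i] lt_i_m1] /=; rewrite ?mxE //.
- case: splitP => t /= t_eq; last by have := ltn_ord j; lia.
  have -> : t = j by apply: val_inj.
  by rewrite trow_mxtensE mxE; congr (A _ _ * _); apply: val_inj.
- case: splitP => t /= t_eq; first by have := ltn_ord t; lia.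
  have -> : t = mxtens_index (Ordinal (lt_i_m1 : i < m1)%N, j).
    by apply: val_inj => /=; lia.
  by rewrite IH mxE; congr (A _ _ * _); apply: val_inj.
Qed.

Lemma tprod_tensmx m1 n1 m2 n2 (A : 'M[F]_(m1, n1)) (B : 'M[F]_(m2, n2)) :
  tprod A B = A *t B.
Proof.
apply/matrixP => x y.
case: (mxtens_indexP x) => i j; case: (mxtens_indexP y) => k l.
by rewrite tprod_mxtensE tensmxE.
Qed.

End KroneckerEntries.

Section TensmxAlgebra.
Variable R : comPzRingType.

Lemma tensmxZl {m n p q} (c : R) (A : 'M[R]_(m, n)) (B : 'M[R]_(p, q)) :
  (c *: A) *t B = c *: (A *t B).
Proof. by apply/matrixP => i j; rewrite !mxE mulrA. Qed.

Lemma tensmx_suml {I : Type} (r : seq I) (P : pred I) {m n p q}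
    (A_ : I -> 'M[R]_(m, n)) (B : 'M[R]_(p, q)) :
  (\sum_(i <- r | P i) A_ i) *t B = \sum_(i <- r | P i) A_ i *t B.
Proof.
apply/matrixP => i j; rewrite !mxE !summxE mulr_suml.
by apply: eq_bigr => k _; rewrite !mxE.
Qed.

Lemma tensmx11 (a : 'M[R]_1) : a *t (1%:M : 'M_1) = a :> 'M_1.
Proof. by apply/matrixP => i j; rewrite !mxE !ord1 mulr1. Qed.

(* Read at type ['cV_(a * b)], the Kronecker product of two column vectors has
   width [1] instead of [1 * 1], which the general rules above do not match. *)

Lemma tensmx_cV_trmx_mul a b (x : 'cV[R]_a) (y : 'cV[R]_b) :
  (x *t y : 'cV_(a * b))^T *m (x *t y : 'cV_(a * b)) = (x^T *m x) *t (y^T *m y).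
Proof. by rewrite -tensmx_mul -trmx_tens. Qed.

Lemma tensmx_mul_cV a b c d (A : 'M[R]_(a, c)) (B : 'M[R]_(b, d))
    (x : 'cV[R]_c) (y : 'cV[R]_d) :
  (A *t B) *m (x *t y : 'cV_(c * d)) = ((A *m x) *t (B *m y) : 'cV_(a * b)).
Proof. exact: (tensmx_mul A B x y). Qed.

Lemma tensmx_cVZl a b (c : R) (x : 'cV[R]_a) (y : 'cV[R]_b) :
  ((c *: x) *t y : 'cV_(a * b)) = c *: (x *t y : 'cV_(a * b)).
Proof. exact: (tensmxZl c x y). Qed.

Lemma tensmx_cV_suml (I : Type) (r : seq I) (P : pred I) a b
    (x_ : I -> 'cV[R]_a) (y : 'cV[R]_b) :
  ((\sum_(i <- r | P i) x_ i) *t y : 'cV_(a * b))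
  = \sum_(i <- r | P i) (x_ i *t y : 'cV_(a * b)).
Proof. exact: (tensmx_suml r P x_ y). Qed.

End TensmxAlgebra.

Section BlockColumns.
Variable R : pzRingType.
Variables (K : nat) (p_ : 'I_K -> nat).

Lemma scale_mxcol n (c : R) (B_ : forall k, 'M[R]_(p_ k, n)) :
  c *: \mxcol_k B_ k = \mxcol_k (c *: B_ k).
Proof. by apply/matrixP => i j; rewrite !mxE. Qed.

Lemma submxcolZ n (c : R) (B : 'M[R]_(\sum_k p_ k, n)) k :
  submxcol (c *: B) k = c *: submxcol B k.
Proof. by apply/matrixP => i j; rewrite !mxE. Qed.

Lemma trmx_mul_sum_submxcol (v : 'cV[R]_(\sum_k p_ k)) :
  v^T *m v = \sum_k (submxcol v k)^T *m submxcol v k.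
Proof. by rewrite -{1 2}(submxcolK v) tr_mxcol mul_mxrow_mxcol. Qed.

Lemma submxcol_neq0 n (B : 'M[R]_(\sum_k p_ k, n)) :
  B != 0 -> exists k, submxcol B k != 0.
Proof.
move=> B_neq0; apply/existsP; apply: contraR B_neq0 => /existsPn subB0.
by apply/eqP/mxcolP => k; rewrite submxcol0; exact/eqP/negbNE.
Qed.

End BlockColumns.

Section Untens.
Context {R : comPzRingType}.

Lemma sum_mxtens_index a b (F : 'I_(a * b) -> R) :
  \sum_t F t = \sum_i \sum_j F (mxtens_index (i, j)).
Proof.
rewrite pair_big (reindex (@mxtens_index a b)) /=.
  by apply: eq_bigr => -[].
exists (@mxtens_unindex a b) => t _.
  exact: mxtens_indexK.
exact: mxtens_unindexK.
Qed.

Definition untens {a b} (x : 'cV[R]_(a * b)) : 'M[R]_(a, b) :=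
  \matrix_(i, j) x (mxtens_index (i, j)) 0.

Fact untens_is_semilinear a b : semilinear (@untens a b).
Proof. by split => [c x | x y]; apply/matrixP => i j; rewrite !mxE. Qed.

HB.instance Definition _ a b :=
  GRing.isSemilinear.Build R _ _ _ (@untens a b) (untens_is_semilinear a b).

Lemma untens_inj a b : injective (@untens a b).
Proof.
move=> x y /matrixP xy; apply/matrixP => t l; case: (mxtens_indexP t) => i j.
by move: (xy i j); rewrite !mxE ord1.
Qed.

Lemma untens_tensmx_mul a b c d (B : 'M[R]_(a, c)) (C : 'M[R]_(b, d))
    (x : 'cV[R]_(c * d)) :
  untens ((B *t C) *m x) = B *m untens x *m C^T.
Proof.
apply/matrixP => i r; rewrite !mxE sum_mxtens_index.
under [RHS]eq_bigr do rewrite !mxE mulr_suml.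
rewrite exchange_big /=; apply: eq_bigr => j _; apply: eq_bigr => l _.
by rewrite !mxE !mxtens_indexK /= mulrAC.
Qed.

End Untens.

Section SingularVectorPairs.
Context {R : realType}.

Lemma unit_cV_neq0 {a} (x : 'cV[R]_a) : x^T *m x = 1%:M -> x != 0.
Proof.
move=> xx; apply/eqP => x0; move: xx; rewrite x0 mulmx0 => /matrixP/(_ 0 0).
by rewrite !mxE => /eqP; rewrite eq_sym oner_eq0.
Qed.

Lemma cV_norm2_gt0 {a} (x : 'cV[R]_a) : x != 0 -> 0 < (x^T *m x) 0 0.
Proof.
have norm2E : (x^T *m x) 0 0 = \sum_i x i 0 ^+ 2.
  by rewrite mxE; apply: eq_bigr => i _; rewrite mxE expr2.
have sqr_x_ge0 i : true -> 0 <= x i 0 ^+ 2 by rewrite sqr_ge0.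
move=> x_neq0; rewrite lt_def norm2E sumr_ge0 ?andbT //.
apply: contra x_neq0 => /eqP /(psumr_eq0P sqr_x_ge0) x2_0.
apply/eqP/matrixP => i j; rewrite ord1 mxE.
by apply/eqP; rewrite -sqrf_eq0 x2_0.
Qed.

Definition cV_norm {a} (x : 'cV[R]_a) := Num.sqrt ((x^T *m x) 0 0).

Lemma cV_normalize {a} (x : 'cV[R]_a) : x != 0 ->
  ((cV_norm x)^-1 *: x)^T *m ((cV_norm x)^-1 *: x) = 1%:M.
Proof.
move=> /cV_norm2_gt0 x2_gt0.
rewrite !linearZ /= -scalemxAl scalerA -invfM -expr2 sqr_sqrtr ?ltW //.
apply/matrixP => i j; rewrite !ord1 [LHS]mxE mulVf ?gt_eqF //.
by rewrite mxE eqxx.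
Qed.

Lemma singular_value_pair {m n} (X : 'M[R]_(m, n)) (s : R)
    (x : 'cV[R]_m) (y : 'cV[R]_n) :
  0 <= s -> x != 0 -> y != 0 -> X *m y = s *: x -> X^T *m x = s *: y ->
  singular_value X s.
Proof.
move=> s_ge0 x_neq0 y_neq0 Xy Xtx; split => //.
have norm_eq : s != 0 -> cV_norm x = cV_norm y.
  move=> s_neq0; suff xx_yy : x^T *m x = y^T *m y by rewrite /cV_norm xx_yy.
  apply: (scalerI s_neq0).
  by rewrite [in RHS]scalemxAr -Xtx mulmxA -trmx_mul Xy linearZ /= scalemxAl.
have scale_eq : s / cV_norm y = s / cV_norm x.
  by have [->|/norm_eq->] := eqVneq s 0; rewrite ?mul0r.
exists ((cV_norm x)^-1 *: x), ((cV_norm y)^-1 *: y).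
split; [exact: cV_normalize | exact: cV_normalize | |].
- by rewrite -scalemxAr Xy !scalerA mulrC scale_eq.
- by rewrite -scalemxAr Xtx !scalerA mulrC scale_eq.
Qed.

Lemma mx_neq0_col {m c} (M : 'M[R]_(m, c)) : M != 0 -> exists j, col j M != 0.
Proof.
move=> M_neq0; apply/existsP; apply: contraR M_neq0 => /existsPn colM0.
apply/eqP/matrixP => i j; move/eqP/matrixP: (negbNE (colM0 j)) => /(_ i 0).
by rewrite !mxE.
Qed.

Lemma singular_value_mx {m n c} (X : 'M[R]_(m, n)) (s : R)
    (U : 'M[R]_(m, c)) (W : 'M[R]_(n, c)) :
  0 <= s -> U != 0 -> W != 0 -> X *m W = s *: U -> X^T *m U = s *: W ->
  singular_value X s.
Proof.
move=> s_ge0 /mx_neq0_col[i Ui] /mx_neq0_col[j Wj] XW XtU.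
have Xcol k : X *m col k W = s *: col k U.
  by rewrite !colE mulmxA XW scalemxAl.
have Xtcol k : X^T *m col k U = s *: col k W.
  by rewrite !colE mulmxA XtU scalemxAl.
(* For s = 0 the two equations decouple, so the columns may differ. *)
have [s0|s_neq0] := eqVneq s 0.
  apply: (singular_value_pair _ _ _ _ s_ge0 Ui Wj).
    by rewrite Xcol s0 !scale0r.
  by rewrite Xtcol s0 !scale0r.
apply: (singular_value_pair _ _ _ _ s_ge0 Ui _ (Xcol i) (Xtcol i)).
apply: contraNneq Ui => Wi0.
move: (Xcol i); rewrite Wi0 mulmx0 => /esym/eqP.
by rewrite scaler_eq0 (negPf s_neq0).
Qed.

End SingularVectorPairs.

Section SingularValueKronecker.
Variables (R : realType) (K m p : nat) (n : 'I_K -> nat).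
Variables (A : forall k, 'M[R]_(m, n k)) (Q : 'I_K -> 'M[R]_p).
Hypothesis QtQ : forall k, (Q k)^T *m Q k = 1%:M.

Let QQt k : Q k *m (Q k)^T = 1%:M. Proof. exact: mulmx1C. Qed.

Lemma singular_value_tens s : (0 < p)%N ->
  singular_value (\mxrow_k A k) s -> singular_value (\mxrow_k (A k *t Q k)) s.
Proof.
move=> p_gt0 [s_ge0 [u [v [uu vv Xv Xu]]]]; split => //.
pose e : 'cV[R]_p := delta_mx (Ordinal p_gt0) 0.
have ee : e^T *m e = 1%:M.
  by rewrite trmx_delta mul_delta_mx; apply/matrixP => i j; rewrite !ord1 !mxE.
have Atu k : (A k)^T *m u = s *: submxcol v k.
  by rewrite -submxcolZ -Xu tr_mxrow mxcol_mul mxcolK.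
exists (u *t e), (\mxcol_k (submxcol v k *t ((Q k)^T *m e))); split.
- by rewrite tensmx_cV_trmx_mul uu ee tensmx11.
- rewrite tr_mxcol mul_mxrow_mxcol -vv trmx_mul_sum_submxcol.
  apply: eq_bigr => k _.
  rewrite tensmx_cV_trmx_mul trmx_mul trmxK mulmxA -(mulmxA e^T) QQt mulmx1 ee.
  exact: tensmx11.
- rewrite mul_mxrow_mxcol.
  under eq_bigr do rewrite tensmx_mul_cV mulmxA QQt mul1mx.
  by rewrite -tensmx_cV_suml -mul_mxrow_mxcol submxcolK Xv tensmx_cVZl.
- rewrite tr_mxrow mxcol_mul scale_mxcol; apply: eq_mxcol => k.
  by rewrite trmx_tens tensmx_mul_cV Atu tensmx_cVZl.
Qed.

Lemma singular_value_untens s :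
  singular_value (\mxrow_k (A k *t Q k)) s -> singular_value (\mxrow_k A k) s.
Proof.
move=> [s_ge0 [u [v [uu vv Yv Ytu]]]].
pose V k := untens (submxcol v k).
have /unit_cV_neq0/submxcol_neq0[k vk_neq0] := vv.
apply: (singular_value_mx _ _ (untens u) (\mxcol_k (V k *m (Q k)^T)) s_ge0).
- rewrite -(raddf0 (@untens _ m p)) (inj_eq (@untens_inj _ _ _)).
  exact: unit_cV_neq0.
- apply: contraNneq vk_neq0 => /(congr1 (fun W => submxcol W k *m Q k)).
  rewrite mxcolK -mulmxA QtQ mulmx1 submxcol0 mul0mx => Vk0.
  by rewrite -(inj_eq (@untens_inj _ _ _)) -/(V k) Vk0 raddf0.
- rewrite mul_mxrow_mxcol -linearZ -Yv -[v]submxcolK mul_mxrow_mxcol.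
  rewrite linear_sum /=.
  by apply: eq_bigr => j _; rewrite untens_tensmx_mul mulmxA.
- rewrite tr_mxrow mxcol_mul scale_mxcol; apply: eq_mxcol => j.
  have := congr1 (fun w => untens (submxcol w j)) Ytu.
  rewrite tr_mxrow mxcol_mul mxcolK trmx_tens untens_tensmx_mul trmxK.
  rewrite submxcolZ linearZ /=.
  by rewrite -/(V j) scalemxAl => <-; rewrite -[RHS]mulmxA QQt mulmx1.
Qed.

End SingularValueKronecker.

Theorem lemma5p3 (R : realType) (K m p : nat) (n : 'I_K -> nat)
  (A : forall k : 'I_K, 'M[R]_(m, n k)) (Q : 'I_K -> 'M[R]_p) :
  (0 < p)%N ->
  (forall k, orthogonal_mx (Q k)) ->
  forall s : R,
    singular_value (\mxrow_(k < K) A k) s <->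
    singular_value (\mxrow_(k < K) tprod (A k) (Q k)) s.
Proof.
move=> p_gt0 QtQ s.
have -> : \mxrow_k tprod (A k) (Q k) = \mxrow_k (A k *t Q k).
  by apply: eq_mxrow => k; rewrite tprod_tensmx.
by split; [exact: singular_value_tens | exact: singular_value_untens].
Qed.
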